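(* Let $V=\{1,\dots,n\}$ and let $f_z:\{0,1\}^n\to\mathbb{R}_+$ be a set function (identified with a function of binary vectors). Suppose there is a sequence of polynomials $\{\hat f_z^L\}_{L\ge1}$, $\hat f_z^L:\mathbb{R}^n\to\mathbb{R}$, and numbers $\varepsilon_z(L)\ge 0$ with $\lim_{L\to\infty}\varepsilon_z(L)=0$ such that $|f_z(\mathbf{x})-\hat f_z^L(\mathbf{x})|\le \varepsilon_z(L)$ for all $\mathbf{x}\in\{0,1\}^n$. Let $G_z$ be the multilinear relaxation of $f_z$ and let $\widehat{\nabla G_z^L}$ be the polynomial estimator defined below. Then for every $\mathbf{y}\in\mathcal{C}$, $$\big\|\nabla G_z(\mathbf{y})-\widehat{\nabla G_z^L}(\mathbf{y})\big\|_2\le 2\sqrt{n}\,\varepsilon_z(L).$$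
   Context: For $\mathbf{y}\in[0,1]^n$, $\mathbf{x}\sim\mathbf{y}$ denotes a random vector in $\{0,1\}^n$ with independent Bernoulli coordinates, $P(x_i=1)=y_i$. The multilinear relaxation of $f_z$ is $G_z(\mathbf{y})=\mathbb{E}_{\mathbf{x}\sim\mathbf{y}}[f_z(\mathbf{x})]=\sum_{\mathbf{x}\in\{0,1\}^n}f_z(\mathbf{x})\prod_{i}y_i^{x_i}(1-y_i)^{1-x_i}$. For a polynomial $p(\mathbf{y})=c_0+\sum_{\ell}c_\ell\prod_{i\in J_\ell}y_i^{k_i^\ell}$ (with $k_i^\ell\ge1$), its multilinearization is $\dot p(\mathbf{y})=c_0+\sum_\ell c_\ell\prod_{i\in J_\ell}y_i$. For $\mathbf{y}$, $[\mathbf{y}]_{+i}$ and $[\mathbf{y}]_{-i}$ denote $\mathbf{y}$ with the $i$-th coordinate set to $1$ and $0$ respectively. The polynomial estimator is the vector with coordinates $\big(\widehat{\nabla G_z^L}(\mathbf{y})\big)_i=\mathbb{E}_{\mathbf{x}\sim\mathbf{y}}[\hat f_z^L([\mathbf{x}]_{+i})]-\mathbb{E}_{\mathbf{x}\sim\mathbf{y}}[\hat f_z^L([\mathbf{x}]_{-i})]=\dot{\hat f}{}_z^L([\mathbf{y}]_{+i})-\dot{\hat f}{}_z^L([\mathbf{y}]_{-i})$, $i\in V$. $\mathcal{C}\subseteq[0,1]^n$ is a matroid polytope (convex hull of the indicator vectors of the independent sets of a matroid on $V$). *)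

From HB Require Import structures.
From mathcomp Require Import all_boot all_order all_algebra.
From mathcomp Require Import mpoly.
Set Implicit Arguments. Unset Strict Implicit. Unset Printing Implicit Defensive.
Import Order.TTheory GRing.Theory Num.Theory.
Local Open Scope ring_scope.

Section Defs.
Variables (R : rcfType) (n : nat).

Definition bvec := {ffun 'I_n -> bool}.

Definition bvR (x : bvec) : 'I_n -> R := fun i => (x i)%:R.

Definition bset (x : bvec) (i : 'I_n) (b : bool) : bvec :=
  [ffun j => if j == i then b else x j].

Definition rset (y : 'I_n -> R) (i : 'I_n) (c : R) : 'I_n -> R :=
  fun j => if j == i then c else y j.

Definition bern_weight (y : 'I_n -> R) (x : bvec) : R :=
  \prod_i (if x i then y i else 1 - y i).

Definition bexp (y : 'I_n -> R) (g : bvec -> R) : R :=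
  \sum_(x : bvec) g x * bern_weight y x.

Definition multilinear_relaxation (f : bvec -> R) : {mpoly R[n]} :=
  \sum_(x : bvec) f x *: \prod_i (if x i then 'X_i else 1 - 'X_i).

Definition grad_G (f : bvec -> R) (y : 'I_n -> R) : 'I_n -> R :=
  fun i => (mderiv i (multilinear_relaxation f)).@[y].

Definition poly_estimator (fhat : {mpoly R[n]}) (y : 'I_n -> R) : 'I_n -> R :=
  fun i => bexp y (fun x => fhat.@[bvR (bset x i true)])
         - bexp y (fun x => fhat.@[bvR (bset x i false)]).

Definition norm2 (v : 'I_n -> R) : R := Num.sqrt (\sum_i v i ^+ 2).

Definition is_matroid (I : {set {set 'I_n}}) : Prop :=
  [/\ set0 \in I,
      (forall A B : {set 'I_n}, B \in I -> A \subset B -> A \in I) &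
      (forall A B : {set 'I_n}, A \in I -> B \in I -> (#|A| < #|B|)%N ->
         exists2 e, e \in B :\: A & e |: A \in I)].

Definition indicator (S : {set 'I_n}) : 'I_n -> R := fun i => (i \in S)%:R.

Definition in_matroid_polytope (I : {set {set 'I_n}}) (y : 'I_n -> R) : Prop :=
  exists lam : {set 'I_n} -> R,
    [/\ forall S, 0 <= lam S,
        (forall S, S \notin I -> lam S = 0),
        \sum_(S in I) lam S = 1 &
        forall i, y i = \sum_(S in I) lam S * indicator S i].

Definition tends_to_zero (eps : nat -> R) : Prop :=
  forall e : R, 0 < e -> exists N : nat, forall L : nat, (N <= L)%N -> `|eps L| <= e.

End Defs.

(* Since G_z is multilinear, its i-th partial derivative at y is
   E_{x~y}[f([x]_{+i})] - E_{x~y}[f([x]_{-i})], which is exactly the polynomial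
   estimator with f in place of fhat.  Each coordinate of the error is thus a
   difference of two expectations of f - fhat, each at most eps in absolute value
   because x ~ y is a probability distribution for y in [0,1]^n; a vector whose n
   coordinates are bounded by 2 eps has Euclidean norm at most 2 sqrt(n) eps.
   Only the inclusion of the matroid polytope in [0,1]^n is used. *)
From HB Require Import structures.
From mathcomp Require Import all_boot all_order all_algebra.
From mathcomp Require Import mpoly.
From mathcomp Require Import ring.
Import Order.TTheory GRing.Theory Num.Theory.
Local Open Scope ring_scope.

Section MultilinearRelaxation.
Variables (R : rcfType) (n : nat).
Implicit Types (x : bvec n) (y : 'I_n -> R) (i j : 'I_n) (b : bool).

Lemma bset_id x i : bset x i (x i) = x.
Proof. by apply/ffunP => j; rewrite ffunE; case: eqP => // ->. Qed.

Lemma bsetK x i b c : bset (bset x i b) i c = bset x i c.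
Proof. by apply/ffunP => j; rewrite !ffunE; case: eqP. Qed.

Lemma bset_at x i b : bset x i b i = b.
Proof. by rewrite ffunE eqxx. Qed.

Lemma sum_bvec_pair i b (F : bvec n -> R) :
  \sum_(x : bvec n) F x
  = \sum_(x : bvec n | x i == b) (F (bset x i b) + F (bset x i (~~ b))).
Proof.
pose flip (x : bvec n) := bset x i (~~ x i).
have flipK : involutive flip by move=> x; rewrite /flip bsetK bset_at negbK bset_id.
rewrite (bigID (fun x => x i == b)) /= big_split /=; congr (_ + _).
  by apply: eq_bigr => x /eqP <-; rewrite bset_id.
rewrite (reindex_inj (inv_inj flipK)) /=.
by apply: eq_big => x; rewrite /flip bset_at; case: (x i); case: b.
Qed.

Definition bern_weight_except y i x : R :=
  \prod_(j | j != i) (if x j then y j else 1 - y j).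

Lemma bern_weight_except_bset y i x b :
  bern_weight_except y i (bset x i b) = bern_weight_except y i x.
Proof. by apply: eq_bigr => j ji; rewrite ffunE (negbTE ji). Qed.

Lemma bern_weight_bigD1 y i x :
  bern_weight y x = (if x i then y i else 1 - y i) * bern_weight_except y i x.
Proof. by rewrite /bern_weight (bigD1 i). Qed.

Lemma bern_weight_bset_pair y i x b :
  bern_weight y (bset x i b) + bern_weight y (bset x i (~~ b))
  = bern_weight_except y i x.
Proof.
rewrite !(bern_weight_bigD1 _ i) !bset_at !bern_weight_except_bset -mulrDl.
by case: b; rewrite /= ?[y i + _]addrC subrK mul1r.
Qed.

Lemma bexp_bset y i b (g : bvec n -> R) :
  bexp y (fun x => g (bset x i b))
  = \sum_(x : bvec n | x i == b) g x * bern_weight_except y i x.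
Proof.
rewrite /bexp (sum_bvec_pair i b); apply: eq_bigr => x /eqP xi.
by rewrite !bsetK -mulrDr bern_weight_bset_pair -xi bset_id.
Qed.

Lemma mderivXU i j : mderiv i ('X_j : {mpoly R[n]}) = (j == i)%:R.
Proof.
rewrite /mpolyX mderivX mnm1E.
case: eqP => [->|_]; last by rewrite scale0r.
have -> : (U_(i) - U_(i) = 0)%MM by apply/mnmP=> k; rewrite mnmBE mnm0E subnn.
by rewrite scale1r mpolyX0.
Qed.

Lemma meval_mderiv_indicator y i x :
  (mderiv i (\prod_j (if x j then 'X_j else 1 - 'X_j))).@[y]
  = (if x i then 1 else -1) * bern_weight_except y i x.
Proof.
rewrite (bigD1 i) //= mderivM.
have -> : mderiv i (\prod_(j | j != i) (if x j then 'X_j else 1 - 'X_j) : {mpoly R[n]}) = 0.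
  apply: (big_ind (fun p => mderiv i p = 0)) => [|p q dp dq|j ji].
  - by rewrite -mpolyC1 mderivC.
  - by rewrite mderivM dp dq mul0r mulr0 addr0.
  by case: (x j); rewrite ?mderivB mderivXU (negbTE ji) // -mpolyC1 mderivC subr0.
rewrite mulr0 addr0 mevalM rmorph_prod /=; congr (_ * _).
  by case: (x i); rewrite ?mderivB mderivXU eqxx ?meval1 // -mpolyC1 mderivC sub0r mevalN meval1.
by apply: eq_bigr => j _; case: (x j); rewrite ?mevalB ?meval1 mevalXU.
Qed.

Lemma grad_G_bexp (f : bvec n -> R) y i :
  grad_G f y i = bexp y (fun x => f (bset x i true)) - bexp y (fun x => f (bset x i false)).
Proof.
rewrite /grad_G /multilinear_relaxation (raddf_sum (mderiv i)) (raddf_sum (meval y)) /=.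
rewrite !bexp_bset (bigID (fun x => x i)) /= -sumrN.
congr (_ + _); apply: eq_big => x; rewrite ?eqb_id ?eqbF_neg // => xi;
  rewrite mderivZ mevalZ meval_mderiv_indicator.
  by rewrite xi mul1r.
by rewrite (negbTE xi) mulN1r mulrN.
Qed.

Lemma bexpB y (g h : bvec n -> R) : bexp y g - bexp y h = bexp y (fun x => g x - h x).
Proof. by rewrite /bexp -sumrB; apply: eq_bigr => x _; rewrite mulrBl. Qed.

Section UnitCube.
Variables (y : 'I_n -> R) (y01 : forall j, 0 <= y j <= 1).

Lemma bern_weight_ge0 x : 0 <= bern_weight y x.
Proof.
apply: prodr_ge0 => j _; have /andP[y0 y1] := y01 j.
by case: (x j); rewrite ?subr_ge0.
Qed.

Lemma sum_bern_weight : \sum_(x : bvec n) bern_weight y x = 1.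
Proof.
rewrite /bern_weight -(bigA_distr_bigA (fun j b => if b then y j else 1 - y j)) /=.
by apply: big1 => j _; rewrite big_bool /= addrC subrK.
Qed.

Lemma bexp_norm_le (g : bvec n -> R) e : (forall x, `|g x| <= e) -> `|bexp y g| <= e.
Proof.
move=> ge; apply: (le_trans (ler_norm_sum _ _ _)).
rewrite -[e]mulr1 -sum_bern_weight mulr_sumr; apply: ler_sum => x _.
by rewrite normrM (ger0_norm (bern_weight_ge0 x)) ler_wpM2r ?bern_weight_ge0.
Qed.

Lemma grad_G_sub_estimator_le (f : bvec n -> R) (fhat : {mpoly R[n]}) e i :
  (forall x, `|f x - fhat.@[bvR R x]| <= e) ->
  `|grad_G f y i - poly_estimator fhat y i| <= 2 * e.
Proof.
move=> fe; rewrite grad_G_bexp /poly_estimator.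
have -> : forall a b c d : R, a - b - (c - d) = (a - c) - (b - d) by move=> *; ring.
rewrite 2!bexpB; apply: (le_trans (ler_normB _ _)).
by rewrite mulr2n mulrDl mul1r lerD // bexp_norm_le.
Qed.

End UnitCube.

Lemma in_matroid_polytope_unit_cube (I : {set {set 'I_n}}) y :
  in_matroid_polytope I y -> forall j, 0 <= y j <= 1.
Proof.
move=> [lam [lam0 _ lam1 yE]] j; rewrite yE; apply/andP; split.
  by apply: sumr_ge0 => S _; rewrite mulr_ge0 ?ler0n.
rewrite -lam1; apply: ler_sum => S _; rewrite -[leRHS]mulr1 ler_wpM2l //.
by rewrite /indicator; case: (j \in S).
Qed.

Lemma norm2_le (v : 'I_n -> R) c :
  0 <= c -> (forall i, `|v i| <= c) -> norm2 v <= Num.sqrt n%:R * c.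
Proof.
move=> c0 vc; apply: (@le_trans _ _ (Num.sqrt (\sum_(i < n) c ^+ 2))).
  rewrite ler_sqrt ?sumr_ge0 // => [|i _]; last exact: sqr_ge0.
  apply: ler_sum => i _.
  by rewrite -real_normK ?num_real // ler_sqr ?nnegrE ?normr_ge0.
by rewrite sumr_const card_ord -[_ *+ n]mulr_natl sqrtrM ?ler0n // sqrtr_sqr ger0_norm.
Qed.

End MultilinearRelaxation.

Theorem lemma2 (R : rcfType) (n : nat)
  (I : {set {set 'I_n}}) (hI : is_matroid I)
  (f : bvec n -> R) (hf : forall x, 0 <= f x)
  (fhat : nat -> {mpoly R[n]}) (eps : nat -> R)
  (heps0 : forall L, (1 <= L)%N -> 0 <= eps L)
  (heps : tends_to_zero eps)
  (happrox : forall L, (1 <= L)%N -> forall x : bvec n,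
      `|f x - (fhat L).@[bvR R x]| <= eps L) :
  forall L, (1 <= L)%N -> forall y : 'I_n -> R, in_matroid_polytope I y ->
    norm2 (fun i => grad_G f y i - poly_estimator (fhat L) y i)
      <= 2 * Num.sqrt (n%:R) * eps L.
Proof.
move=> L L1 y /in_matroid_polytope_unit_cube y01.
rewrite [2 * _]mulrC -mulrA.
apply: norm2_le => [|i]; first by rewrite mulr_ge0 ?heps0.
exact: grad_G_sub_estimator_le (happrox L L1).
Qed.
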